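(* There is an absolute constant $C$ such that for every $n\geq 1$, every $w\in\{0,1\}^n$ and every binary string $w'\neq w$ of any length $\geq 1$, there is a prenex first-order sentence over $\tau_{\mathsf{string}}$ with at most $\log_2(n)+C$ quantifiers, whose quantifier prefix strictly alternates and ends with $\forall$, that is true in $\mathbf{B}_w$ and false in $\mathbf{B}_{w'}$.
   Context: Vocabulary $\tau_{\mathsf{string}}=\langle <, S;\ \mathsf{min},\mathsf{max}\rangle$ with $<$ binary, $S$ unary, $\mathsf{min},\mathsf{max}$ constants. A string $w=w_1\cdots w_n\in\{0,1\}^n$ ($n\geq 1$) is encoded by the structure $\mathbf{B}_w$ with universe $\{1,\dots,n\}$, $<$ the usual order, $S=\{i: w_i=1\}$, $\mathsf{min}=1$, $\mathsf{max}=n$. The number of quantifiers is the number of quantifier occurrences. *)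

From Stdlib Require Import Reals List Arith PeanoNat.
Import ListNotations.

Inductive term : Type :=
| TVar : nat -> term
| TMin : term
| TMax : term.

Inductive formula : Type :=
| FLt  : term -> term -> formula
| FS   : term -> formula
| FEq  : term -> term -> formula
| FTrue : formula
| FFalse : formula
| FNot : formula -> formula
| FAnd : formula -> formula -> formula
| FOr  : formula -> formula -> formula
| FImp : formula -> formula -> formula
| FEx  : nat -> formula -> formula
| FAll : nat -> formula -> formula.

Definition term_vars (t : term) : list nat :=
  match t with TVar i => [i] | _ => [] end.

Fixpoint free_vars (f : formula) : list nat :=
  match f with
  | FLt a b | FEq a b => term_vars a ++ term_vars b
  | FS a => term_vars a
  | FTrue | FFalse => []
  | FNot g => free_vars g
  | FAnd g h | FOr g h | FImp g h => free_vars g ++ free_vars h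
  | FEx i g | FAll i g => filter (fun j => negb (Nat.eqb i j)) (free_vars g)
  end.

Definition is_sentence (f : formula) : Prop := free_vars f = [].

Fixpoint qcount (f : formula) : nat :=
  match f with
  | FLt _ _ | FS _ | FEq _ _ | FTrue | FFalse => 0
  | FNot g => qcount g
  | FAnd g h | FOr g h | FImp g h => qcount g + qcount h
  | FEx _ g | FAll _ g => S (qcount g)
  end.

Definition quantifier_free (f : formula) : Prop := qcount f = 0.

(* Leading quantifier block: list of quantifier kinds (true = forall,
   false = exists), outermost first, and the remaining matrix. *)
Fixpoint qprefix (f : formula) : list bool :=
  match f with
  | FEx _ g => false :: qprefix g
  | FAll _ g => true :: qprefix g
  | _ => []
  end.

Fixpoint matrix (f : formula) : formula :=
  match f with
  | FEx _ g | FAll _ g => matrix g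
  | g => g
  end.

Definition prenex (f : formula) : Prop := quantifier_free (matrix f).

Fixpoint strictly_alternating (l : list bool) : Prop :=
  match l with
  | a :: ((b :: _) as l') => a <> b /\ strictly_alternating l'
  | _ => True
  end.

Definition ends_with_forall (l : list bool) : Prop :=
  l <> [] /\ last l false = true.

(* The structure B_w: universe {1..n}, n = length w, usual order,
   S = {i | w_i = 1}, min = 1, max = n.  Letters: true = 1, false = 0. *)
Definition eval_term (w : list bool) (env : nat -> nat) (t : term) : nat :=
  match t with
  | TVar i => env i
  | TMin => 1
  | TMax => length w
  end.

Definition update (env : nat -> nat) (i v : nat) : nat -> nat :=
  fun j => if Nat.eqb j i then v else env j.

Fixpoint sat (w : list bool) (env : nat -> nat) (f : formula) : Prop :=
  match f with
  | FLt a b => eval_term w env a < eval_term w env b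
  | FS a => nth (eval_term w env a - 1) w false = true
  | FEq a b => eval_term w env a = eval_term w env b
  | FTrue => True
  | FFalse => False
  | FNot g => ~ sat w env g
  | FAnd g h => sat w env g /\ sat w env h
  | FOr g h => sat w env g \/ sat w env h
  | FImp g h => sat w env g -> sat w env h
  | FEx i g => exists v, 1 <= v <= length w /\ sat w (update env i v) g
  | FAll i g => forall v, 1 <= v <= length w -> sat w (update env i v) g
  end.

Definition models (w : list bool) (f : formula) : Prop := sat w (fun _ => 1) f.

Definition log2R (x : R) : R := ln x / ln 2.

From Stdlib Require Import Reals List.
From Stdlib Require Import Arith PeanoNat Lia Lra Classical Setoid.
Import ListNotations.

(* A word w of length n is told apart from w' <> w by one of three properties: the length
   is at least n, the length is at most n, or some position carries the letter of w there,
   that position being pinned down as the one with exactly j positions before it and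
   n - 1 - j after it.  All three reduce to formulas expressing a + e <= b, and these need
   only O(log e) alternating quantifiers, since
     a + e <= b  <->  exists x, a + e/2 <= x /\ x + (e - e/2) <= b,
     a + e <= b  <->  a < b /\ forall x in [a, b), a + s <= x \/ x + (e + 1 - s) <= b
   with s = (e + 1)/2, each step halving e and switching the quantifier.  To stay prenex,
   the two halves share a single prefix in which depth d always binds x_d; they talk about
   disjoint ranges of that shared variable, so for each of its values one half is constant
   in the remaining variables, and the prefix then distributes over the connective. *)

Fixpoint alt_prefix (q : bool) (d k : nat) (M : formula) : formula :=
  match k with
  | 0 => M
  | S k => if q then FAll d (alt_prefix false (S d) k M)
           else FEx d (alt_prefix true (S d) k M)
  end.

Definition agree (d : nat) (env1 env2 : nat -> nat) : Prop :=
  forall i, i < d -> env1 i = env2 i.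

Definition term_below (d : nat) (t : term) : Prop :=
  match t with TVar i => i < d | _ => True end.

Fixpoint qf_below (d : nat) (f : formula) : Prop :=
  match f with
  | FLt a b | FEq a b => term_below d a /\ term_below d b
  | FS a => term_below d a
  | FTrue | FFalse => True
  | FNot g => qf_below d g
  | FAnd g h | FOr g h | FImp g h => qf_below d g /\ qf_below d h
  | FEx _ _ | FAll _ _ => False
  end.

Lemma update_eq env i v : update env i v i = v.
Proof. unfold update; now rewrite Nat.eqb_refl. Qed.

Lemma update_neq env i j v : j <> i -> update env i v j = env j.
Proof. intros Hji; unfold update; now destruct (Nat.eqb_spec j i). Qed.

Lemma agree_update d env v : agree d (update env d v) env.
Proof. intros i Hi; apply update_neq; lia. Qed.

Lemma agree_update_inv d env env' v : agree (S d) env' (update env d v) -> agree d env' env.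
Proof. intros H i Hi; rewrite H by lia; apply update_neq; lia. Qed.

Lemma term_below_mono d d' t : d <= d' -> term_below d t -> term_below d' t.
Proof. destruct t; simpl; auto; lia. Qed.

Lemma eval_agree w d t env1 env2 :
  term_below d t -> agree d env1 env2 -> eval_term w env1 t = eval_term w env2 t.
Proof. destruct t; simpl; auto. Qed.

Lemma eval_update w i t env v :
  term_below i t -> eval_term w (update env i v) t = eval_term w env t.
Proof. intros Ht; apply (eval_agree w i); auto using agree_update. Qed.

Definition indep_at (w : list bool) (d : nat) (M : formula) (env : nat -> nat) : Prop :=
  forall env', agree d env' env -> (sat w env' M <-> sat w env M).

Lemma indep_at_update w d M env v :
  indep_at w d M env -> indep_at w (S d) M (update env d v).
Proof.
  intros H env' Ha; rewrite (H env' (agree_update_inv _ _ _ _ Ha)).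
  symmetry; apply H, agree_update.
Qed.

Lemma qf_below_indep w d f env : qf_below d f -> indep_at w d f env.
Proof.
  intros Hf env' Ha; revert Hf; induction f; simpl; intros Hf; try tauto;
    repeat match goal with
    | |- context [eval_term w env' ?t] => rewrite (eval_agree w d t env' env) by tauto
    end; try tauto;
    repeat match goal with IH : qf_below d ?g -> _ |- _ => rewrite IH by tauto; clear IH end;
    tauto.
Qed.

Lemma qf_below_qcount d f : qf_below d f -> qcount f = 0.
Proof. induction f; simpl; try tauto; intros [Hg Hh]; rewrite IHf1, IHf2; auto. Qed.

Lemma qf_below_free_vars d f : qf_below d f -> forall x, In x (free_vars f) -> x < d.
Proof.
  assert (Ht : forall t, term_below d t -> forall x, In x (term_vars t) -> x < d)
    by (destruct t; simpl; intros Ht x Hx; [destruct Hx as [<- | []] | ..]; tauto).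
  induction f; simpl; intros Hf x Hx; try tauto;
    try (apply in_app_iff in Hx; destruct Hf, Hx; eauto; fail); eauto.
Qed.

Section AltPrefix.

Variable w : list bool.
Hypothesis w_nonempty : 1 <= length w.

Lemma alt_prefix_ext q d k env M1 M2 :
  (forall env', agree d env' env -> (sat w env' M1 <-> sat w env' M2)) ->
  (sat w env (alt_prefix q d k M1) <-> sat w env (alt_prefix q d k M2)).
Proof.
  revert q d env; induction k as [|k IHk]; intros q d env H; simpl.
  - apply H; intros i _; reflexivity.
  - assert (E : forall v q', sat w (update env d v) (alt_prefix q' (S d) k M1) <->
                             sat w (update env d v) (alt_prefix q' (S d) k M2))
      by (intros v q'; apply IHk; intros env' Ha; apply H; eapply agree_update_inv; eauto).
    destruct q; simpl; setoid_rewrite E; reflexivity.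
Qed.

Lemma alt_prefix_indep q d k env M :
  indep_at w d M env -> (sat w env (alt_prefix q d k M) <-> sat w env M).
Proof.
  revert q d env; induction k as [|k IHk]; intros q d env H; simpl; [tauto|].
  assert (E : forall v q', sat w (update env d v) (alt_prefix q' (S d) k M) <-> sat w env M)
    by (intros v q'; rewrite IHk by (apply indep_at_update; auto); apply H, agree_update).
  destruct q; simpl; setoid_rewrite E; split.
  - intros Hall; apply (Hall 1); lia.
  - auto.
  - intros [v [_ Hv]]; exact Hv.
  - intros HM; exists 1; split; [lia | exact HM].
Qed.

Lemma alt_prefix_and_l q d k env B M : indep_at w d B env ->
  (sat w env (alt_prefix q d k (FAnd B M)) <-> sat w env B /\ sat w env (alt_prefix q d k M)).
Proof.
  intros HB; destruct (classic (sat w env B)) as [Hb | Hb].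
  - rewrite (alt_prefix_ext _ _ _ _ _ M); [tauto|].
    intros env' Ha; simpl; rewrite (HB env' Ha); tauto.
  - rewrite alt_prefix_indep; [simpl; tauto|].
    intros env' Ha; simpl; rewrite (HB env' Ha); tauto.
Qed.

Lemma alt_prefix_or_l q d k env B M : indep_at w d B env ->
  (sat w env (alt_prefix q d k (FOr B M)) <-> sat w env B \/ sat w env (alt_prefix q d k M)).
Proof.
  intros HB; destruct (classic (sat w env B)) as [Hb | Hb].
  - rewrite alt_prefix_indep; [simpl; tauto|].
    intros env' Ha; simpl; rewrite (HB env' Ha); tauto.
  - rewrite (alt_prefix_ext _ _ _ _ _ M); [tauto|].
    intros env' Ha; simpl; rewrite (HB env' Ha); tauto.
Qed.

Lemma alt_prefix_imp_l q d k env B M : indep_at w d B env ->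
  (sat w env (alt_prefix q d k (FImp B M)) <-> (sat w env B -> sat w env (alt_prefix q d k M))).
Proof.
  intros HB; destruct (classic (sat w env B)) as [Hb | Hb].
  - rewrite (alt_prefix_ext _ _ _ _ _ M); [tauto|].
    intros env' Ha; simpl; rewrite (HB env' Ha); tauto.
  - rewrite alt_prefix_indep; [simpl; tauto|].
    intros env' Ha; simpl; rewrite (HB env' Ha); tauto.
Qed.

Lemma alt_prefix_all_and d k env M1 M2 :
  (forall v, 1 <= v <= length w ->
     indep_at w (S d) M1 (update env d v) \/ indep_at w (S d) M2 (update env d v)) ->
  (sat w env (alt_prefix true d k (FAnd M1 M2)) <->
   sat w env (alt_prefix true d k M1) /\ sat w env (alt_prefix true d k M2)).
Proof.
  intros H; destruct k as [|k]; simpl; [tauto|].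
  assert (E : forall v, 1 <= v <= length w ->
    (sat w (update env d v) (alt_prefix false (S d) k (FAnd M1 M2)) <->
     sat w (update env d v) (alt_prefix false (S d) k M1) /\
     sat w (update env d v) (alt_prefix false (S d) k M2))).
  { intros v Hv; destruct (H v Hv) as [H1 | H2].
    - rewrite alt_prefix_and_l, (alt_prefix_indep _ _ _ _ M1) by auto; tauto.
    - rewrite (alt_prefix_ext _ _ _ _ _ (FAnd M2 M1)) by (intros; simpl; tauto).
      rewrite alt_prefix_and_l, (alt_prefix_indep _ _ _ _ M2) by auto; tauto. }
  split.
  - intros Hall; split; intros v Hv; apply (E v Hv), Hall, Hv.
  - intros [H1 H2] v Hv; apply (E v Hv); auto.
Qed.

Lemma alt_prefix_ex_or d k env M1 M2 :
  (forall v, 1 <= v <= length w ->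
     indep_at w (S d) M1 (update env d v) \/ indep_at w (S d) M2 (update env d v)) ->
  (sat w env (alt_prefix false d k (FOr M1 M2)) <->
   sat w env (alt_prefix false d k M1) \/ sat w env (alt_prefix false d k M2)).
Proof.
  intros H; destruct k as [|k]; simpl; [tauto|].
  assert (E : forall v, 1 <= v <= length w ->
    (sat w (update env d v) (alt_prefix true (S d) k (FOr M1 M2)) <->
     sat w (update env d v) (alt_prefix true (S d) k M1) \/
     sat w (update env d v) (alt_prefix true (S d) k M2))).
  { intros v Hv; destruct (H v Hv) as [H1 | H2].
    - rewrite alt_prefix_or_l, (alt_prefix_indep _ _ _ _ M1) by auto; tauto.
    - rewrite (alt_prefix_ext _ _ _ _ _ (FOr M2 M1)) by (intros; simpl; tauto).
      rewrite alt_prefix_or_l, (alt_prefix_indep _ _ _ _ M2) by auto; tauto. }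
  split.
  - intros [v [Hv Hs]]; apply (E v Hv) in Hs as [Hs | Hs]; [left | right]; exists v; auto.
  - intros [[v [Hv Hs]] | [v [Hv Hs]]]; exists v; split; auto; apply (E v Hv); auto.
Qed.

End AltPrefix.

Lemma alt_prefix_not w q d k env M :
  sat w env (alt_prefix q d k (FNot M)) <-> ~ sat w env (alt_prefix (negb q) d k M).
Proof.
  revert q d env; induction k as [|k IHk]; intros q d env; simpl; [tauto|].
  destruct q; simpl; setoid_rewrite IHk; simpl; split.
  - intros Hall [v [Hv Hs]]; exact (Hall v Hv Hs).
  - intros Hn v Hv Hs; apply Hn; exists v; auto.
  - intros [v [Hv Hs]] Hall; exact (Hs (Hall v Hv)).
  - intros Hn; apply NNPP; intros Hno; apply Hn; intros v Hv; apply NNPP; intros Hs.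
    apply Hno; exists v; auto.
Qed.

Fixpoint alt_list (q : bool) (k : nat) : list bool :=
  match k with 0 => [] | S k => q :: alt_list (negb q) k end.

Lemma alt_list_alternating q k : strictly_alternating (alt_list q k).
Proof.
  revert q; induction k as [|[|k] IHk]; intros q; simpl; auto.
  split; [destruct q; discriminate | apply (IHk (negb q))].
Qed.

Lemma alt_list_last_even q t : last (alt_list q (2 * S t)) false = negb q.
Proof.
  revert q; induction t as [|t IHt]; intros q; [reflexivity|].
  replace (2 * S (S t)) with (S (S (2 * S t))) by lia.
  change (last (alt_list (negb (negb q)) (2 * S t)) false = negb q).
  rewrite IHt; apply Bool.negb_involutive.
Qed.

Section PrefixShape.

Variables (M : formula) (m : nat).
Hypothesis M_qf : qf_below m M.

Lemma alt_prefix_qprefix q d k : qprefix (alt_prefix q d k M) = alt_list q k.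
Proof.
  revert q d; induction k as [|k IHk]; intros q d; simpl.
  - destruct M; easy.
  - destruct q; simpl; rewrite IHk; reflexivity.
Qed.

Lemma alt_prefix_matrix q d k : matrix (alt_prefix q d k M) = M.
Proof.
  revert q d; induction k as [|k IHk]; intros q d; simpl.
  - destruct M; easy.
  - destruct q; apply IHk.
Qed.

Lemma alt_prefix_qcount q d k : qcount (alt_prefix q d k M) = k.
Proof.
  revert q d; induction k as [|k IHk]; intros q d; simpl.
  - exact (qf_below_qcount m M M_qf).
  - destruct q; simpl; rewrite IHk; reflexivity.
Qed.

Lemma alt_prefix_free_vars q d k x :
  In x (free_vars (alt_prefix q d k M)) -> In x (free_vars M) /\ (x < d \/ d + k <= x).
Proof.
  revert q d; induction k as [|k IHk]; intros q d Hx; simpl in Hx.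
  - split; auto; lia.
  - destruct q; simpl in Hx; apply filter_In in Hx as [Hx Hxd];
      apply IHk in Hx as [Hx Hr]; split; auto;
      destruct (Nat.eqb_spec d x); simpl in Hxd; [discriminate | lia | discriminate | lia].
Qed.

Lemma ex_prefix_shape t (K := 2 * S t) :
  m <= K ->
  let phi := alt_prefix false 0 K M in
  is_sentence phi /\ prenex phi /\ qcount phi = K /\
  strictly_alternating (qprefix phi) /\ ends_with_forall (qprefix phi).
Proof.
  intros HmK phi; unfold phi; rewrite alt_prefix_qprefix.
  split; [|split; [|split; [|split]]].
  - unfold is_sentence; destruct (free_vars _) as [|x l] eqn:E; auto.
    destruct (alt_prefix_free_vars false 0 K x) as [Hx Hr]; [rewrite E; now left|].
    apply (qf_below_free_vars m M M_qf) in Hx; lia.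
  - unfold prenex, quantifier_free; rewrite alt_prefix_matrix.
    exact (qf_below_qcount m M M_qf).
  - apply alt_prefix_qcount.
  - apply alt_list_alternating.
  - split; [discriminate | apply alt_list_last_even].
Qed.

End PrefixShape.

Definition FLe (a b : term) : formula := FOr (FLt a b) (FEq a b).

Definition in_range (a b u : term) : formula := FAnd (FLe a u) (FLt u b).

Definition dist_base (a b : term) (e : nat) : formula :=
  if e =? 0 then FLe a b else FLt a b.

Fixpoint dist (k : nat) (q : bool) (d : nat) (a b : term) (e : nat) : formula :=
  if e <=? 1 then dist_base a b e else
  match k with
  | 0 => FFalse (* junk: depth too small for e *)
  | S k =>
    let u := TVar d in
    if q then
      FAnd (FLt a b) (FImp (in_range a b u)
        (FOr (dist k false (S d) a u ((e + 1) / 2))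
             (dist k false (S d) u b (e + 1 - (e + 1) / 2))))
    else
      FAnd (in_range a b u)
        (FAnd (dist k true (S d) a u (e / 2)) (dist k true (S d) u b (e - e / 2)))
  end.

Lemma half_bounds e : 2 * (e / 2) <= e <= 2 * (e / 2) + 1.
Proof. pose proof (Nat.div_mod_eq e 2); pose proof (Nat.mod_upper_bound e 2); lia. Qed.

Lemma dist_small k q d a b e : e <= 1 -> dist k q d a b e = dist_base a b e.
Proof. intros He; destruct k; simpl; destruct (Nat.leb_spec e 1); auto; lia. Qed.

Lemma dist_all_unfold k d a b e : 2 <= e ->
  dist (S k) true d a b e =
  FAnd (FLt a b) (FImp (in_range a b (TVar d))
    (FOr (dist k false (S d) a (TVar d) ((e + 1) / 2))
         (dist k false (S d) (TVar d) b (e + 1 - (e + 1) / 2)))).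
Proof. intros He; simpl; destruct (Nat.leb_spec e 1); auto; lia. Qed.

Lemma dist_ex_unfold k d a b e : 2 <= e ->
  dist (S k) false d a b e =
  FAnd (in_range a b (TVar d))
    (FAnd (dist k true (S d) a (TVar d) (e / 2)) (dist k true (S d) (TVar d) b (e - e / 2))).
Proof. intros He; simpl; destruct (Nat.leb_spec e 1); auto; lia. Qed.

Lemma sat_dist_base w env a b e : e <= 1 ->
  sat w env (dist_base a b e) <-> eval_term w env a + e <= eval_term w env b.
Proof. intros He; unfold dist_base, FLe; destruct e as [|[|]]; simpl; lia. Qed.

Lemma sat_in_range w env a b u :
  sat w env (in_range a b u) <->
  eval_term w env a <= eval_term w env u < eval_term w env b.
Proof. unfold in_range, FLe; simpl; lia. Qed.

Lemma dist_base_qf_below d a b e :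
  term_below d a -> term_below d b -> qf_below d (dist_base a b e).
Proof. intros Ha Hb; unfold dist_base, FLe; destruct (_ =? _); cbn [qf_below]; tauto. Qed.

Lemma in_range_qf_below d a b :
  term_below d a -> term_below d b -> qf_below (S d) (in_range a b (TVar d)).
Proof.
  intros Ha Hb; apply (term_below_mono _ (S d)) in Ha, Hb; [|lia ..].
  unfold in_range, FLe; cbn [qf_below term_below]; repeat split; auto.
Qed.

Lemma dist_qf_below k q d a b e :
  term_below d a -> term_below d b -> qf_below (d + k) (dist k q d a b e).
Proof.
  revert q d a b e; induction k as [|k IHk]; intros q d a b e Ha Hb;
    (destruct (Nat.leb_spec e 1) as [He | He];
     [rewrite dist_small by exact He;
      apply dist_base_qf_below; (eapply term_below_mono; [|eassumption]; lia) |]).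
  - simpl; destruct (Nat.leb_spec e 1); [lia | exact I].
  - replace (d + S k) with (S d + k) by lia.
    assert (Hu : term_below (S d) (TVar d)) by (simpl; lia).
    apply (term_below_mono _ (S d)) in Ha, Hb; [|lia ..].
    destruct q; [rewrite dist_all_unfold | rewrite dist_ex_unfold]; auto;
      unfold in_range, FLe; cbn [qf_below]; repeat split;
      first [apply IHk; assumption | apply (term_below_mono (S d)); [lia | assumption]].
Qed.

Lemma dist_out_of_range w k q d a b e env :
  term_below d a -> term_below d b -> ~ sat w env (in_range a b (TVar d)) ->
  indep_at w (S d) (dist k q d a b e) env.
Proof.
  intros Ha Hb Hout.
  assert (HR := in_range_qf_below d a b Ha Hb).
  apply (term_below_mono _ (S d)) in Ha, Hb; [|lia ..].
  destruct (Nat.leb_spec e 1) as [He | He].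
  { rewrite dist_small by exact He; apply qf_below_indep, dist_base_qf_below; auto. }
  destruct k as [|k]; [simpl; destruct (Nat.leb_spec e 1); [lia | apply qf_below_indep; exact I]|].
  intros env' Hag.
  pose proof (qf_below_indep w _ _ env HR env' Hag) as HR'.
  assert (Hab : sat w env' (FLt a b) <-> sat w env (FLt a b))
    by (refine (qf_below_indep w (S d) _ env _ env' Hag); split; assumption).
  destruct q; [rewrite dist_all_unfold | rewrite dist_ex_unfold]; auto;
    cbn [sat] in *; tauto.
Qed.

Ltac simpl_eval :=
  cbn [eval_term];
  repeat first
    [ rewrite update_eq
    | rewrite update_neq by lia
    | rewrite eval_update by (eapply term_below_mono; [|eassumption]; lia) ].

Ltac eval_side := solve [simpl_eval; lia | eapply term_below_mono; [|eassumption]; lia | simpl; lia].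

Section DistSpec.

Variable w : list bool.
Hypothesis w_nonempty : 1 <= length w.

Definition dist_spec (k : nat) (q : bool) (e : nat) : Prop :=
  forall d a b env, term_below d a -> term_below d b ->
  1 <= eval_term w env a <= length w -> 1 <= eval_term w env b <= length w ->
  (sat w env (alt_prefix q d k (dist k q d a b e)) <->
   eval_term w env a + e <= eval_term w env b).

Lemma dist_spec_small k q e : e <= 1 -> dist_spec k q e.
Proof.
  intros He d a b env Ha Hb _ _; rewrite dist_small by exact He.
  rewrite alt_prefix_indep by first [exact w_nonempty |
    apply qf_below_indep, dist_base_qf_below; assumption].
  apply sat_dist_base, He.
Qed.

(* The ranges [a, x) and [x, b) of the two halves are disjoint. *)
Lemma dist_halves_indep k q d a b e1 e2 env v u :
  term_below d a -> term_below d b ->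
  indep_at w (S (S d)) (dist k q (S d) a (TVar d) e1) (update (update env d v) (S d) u) \/
  indep_at w (S (S d)) (dist k q (S d) (TVar d) b e2) (update (update env d v) (S d) u).
Proof.
  intros Ha Hb; destruct (lt_dec u v); [right | left];
    apply dist_out_of_range; try eval_side; rewrite sat_in_range; simpl_eval; lia.
Qed.

Lemma alt_prefix_ex_split k d P a b e1 e2 env :
  term_below d a -> term_below d b -> qf_below (S d) P ->
  1 <= eval_term w env a <= length w -> 1 <= eval_term w env b <= length w ->
  dist_spec k true e1 -> dist_spec k true e2 ->
  (sat w env (alt_prefix false d (S k)
     (FAnd P (FAnd (dist k true (S d) a (TVar d) e1) (dist k true (S d) (TVar d) b e2)))) <->
   exists v, 1 <= v <= length w /\ sat w (update env d v) P /\
     eval_term w env a + e1 <= v /\ v + e2 <= eval_term w env b).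
Proof.
  intros Ha Hb HP Hva Hvb H1 H2; cbn [alt_prefix sat].
  assert (E : forall v, 1 <= v <= length w ->
    (sat w (update env d v) (alt_prefix true (S d) k
       (FAnd P (FAnd (dist k true (S d) a (TVar d) e1) (dist k true (S d) (TVar d) b e2)))) <->
     sat w (update env d v) P /\
     eval_term w env a + e1 <= v /\ v + e2 <= eval_term w env b)).
  { intros v Hv.
    rewrite alt_prefix_and_l, alt_prefix_all_and by auto using qf_below_indep, dist_halves_indep.
    rewrite (H1 (S d) a (TVar d)), (H2 (S d) (TVar d) b) by eval_side.
    simpl_eval; reflexivity. }
  split; intros [v [Hv Hs]]; exists v; split; auto; apply (E v Hv), Hs.
Qed.

Lemma alt_prefix_all_split k d a b s1 s2 env :
  term_below d a -> term_below d b ->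
  1 <= eval_term w env a <= length w -> 1 <= eval_term w env b <= length w ->
  dist_spec k false s1 -> dist_spec k false s2 ->
  (sat w env (alt_prefix true d (S k)
     (FAnd (FLt a b) (FImp (in_range a b (TVar d))
        (FOr (dist k false (S d) a (TVar d) s1) (dist k false (S d) (TVar d) b s2))))) <->
   forall v, 1 <= v <= length w ->
     eval_term w env a < eval_term w env b /\
     (eval_term w env a <= v < eval_term w env b ->
      eval_term w env a + s1 <= v \/ v + s2 <= eval_term w env b)).
Proof.
  intros Ha Hb Hva Hvb H1 H2; cbn [alt_prefix sat].
  assert (HR := in_range_qf_below d a b Ha Hb).
  assert (E : forall v, 1 <= v <= length w ->
    (sat w (update env d v) (alt_prefix false (S d) k
       (FAnd (FLt a b) (FImp (in_range a b (TVar d))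
          (FOr (dist k false (S d) a (TVar d) s1) (dist k false (S d) (TVar d) b s2))))) <->
     eval_term w env a < eval_term w env b /\
     (eval_term w env a <= v < eval_term w env b ->
      eval_term w env a + s1 <= v \/ v + s2 <= eval_term w env b))).
  { intros v Hv.
    rewrite alt_prefix_and_l, alt_prefix_imp_l, alt_prefix_ex_or
      by (auto using dist_halves_indep; apply qf_below_indep; auto; split; eval_side).
    rewrite sat_in_range, (H1 (S d) a (TVar d)), (H2 (S d) (TVar d) b) by eval_side.
    cbn [sat]; simpl_eval; reflexivity. }
  split; intros Hall v Hv; apply (E v Hv), Hall, Hv.
Qed.

Lemma dist_spec_ex_step k e :
  (forall e', e' <= e - e / 2 -> dist_spec k true e') -> dist_spec (S k) false e.
Proof.
  intros IH d a b env Ha Hb Hva Hvb.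
  destruct (Nat.leb_spec e 1) as [He | He]; [apply dist_spec_small; auto|].
  pose proof (half_bounds e).
  rewrite dist_ex_unfold, alt_prefix_ex_split
    by first [lia | apply in_range_qf_below; assumption | apply IH; lia | assumption].
  split.
  - intros [v [_ [_ [H1 H2]]]]; lia.
  - intros Hab; exists (eval_term w env a + e / 2); split; [lia|].
    rewrite sat_in_range; simpl_eval; lia.
Qed.

Lemma dist_spec_all_step k e :
  (forall e', e' <= e + 1 - (e + 1) / 2 -> dist_spec k false e') -> dist_spec (S k) true e.
Proof.
  intros IH d a b env Ha Hb Hva Hvb.
  destruct (Nat.leb_spec e 1) as [He | He]; [apply dist_spec_small; auto|].
  pose proof (half_bounds (e + 1)).
  rewrite dist_all_unfold, alt_prefix_all_split by (auto; apply IH; lia).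
  set (A := eval_term w env a) in *; set (B := eval_term w env b) in *.
  split.
  - intros Hall.
    assert (Hab : A < B) by (apply (Hall 1); lia).
    destruct (le_lt_dec (A + e) B) as [Hle | Hgt]; [exact Hle | exfalso].
    (* a position closer than (e + 1)/2 to A and than e + 1 - (e + 1)/2 to B *)
    destruct (Hall (Nat.max A (B + 1 - (e + 1 - (e + 1) / 2)))) as [_ Hv]; lia.
  - intros Hle v Hv; split; [lia | intros; lia].
Qed.

Lemma dist_spec_log k q e : e <= 2 ^ k + 1 -> dist_spec (k + 2) q e.
Proof.
  revert q e; induction k as [|k IHk]; intros q e He;
    pose proof (half_bounds e); pose proof (half_bounds (e + 1)).
  - destruct q; [apply dist_spec_all_step | apply dist_spec_ex_step]; intros e' He'; simpl in He.
    + apply dist_spec_ex_step; intros e'' He''; apply dist_spec_small.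
      pose proof (half_bounds e'); lia.
    + apply dist_spec_small; lia.
  - replace (S k + 2) with (S (k + 2)) by lia; simpl in He.
    destruct q; [apply dist_spec_all_step | apply dist_spec_ex_step];
      intros e' He'; apply IHk; lia.
Qed.

Lemma dist_spec_of_log2 k q e : Nat.log2 e + 3 <= k -> dist_spec k q e.
Proof.
  intros Hk; replace k with ((k - 2) + 2) by lia; apply dist_spec_log.
  destruct e as [|e]; [lia|].
  pose proof (Nat.log2_spec (S e) ltac:(lia)) as [_ Hlt].
  pose proof (Nat.pow_le_mono_r 2 (S (Nat.log2 (S e))) (k - 2) ltac:(lia) ltac:(lia)); lia.
Qed.

End DistSpec.

Lemma models_dist_min_max w K q e : 1 <= length w -> dist_spec w K q e ->
  models w (alt_prefix q 0 K (dist K q 0 TMin TMax e)) <-> 1 + e <= length w.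
Proof. intros Hw H; apply H; simpl; auto; lia. Qed.

Definition letter (c : bool) (t : term) : formula := if c then FS t else FNot (FS t).

Lemma letter_qf_below d c t : term_below d t -> qf_below d (letter c t).
Proof. destruct c; simpl; auto. Qed.

Lemma sat_letter w env c t :
  sat w env (letter c t) <-> nth (eval_term w env t - 1) w false = c.
Proof. destruct c, (nth _ w false) eqn:E; simpl; rewrite ?E; intuition congruence. Qed.

(* Under the prefix [exists x_0 ...], the position x_0 carries the letter [c] and has
   [j] positions to its left and [e] to its right. *)
Definition letter_at (k j e : nat) (c : bool) : formula :=
  FAnd (letter c (TVar 0))
    (FAnd (dist k true 1 TMin (TVar 0) j) (dist k true 1 (TVar 0) TMax e)).

Lemma models_letter_at w k j e c : j + 1 + e = length w ->
  dist_spec w k true j -> dist_spec w k true e ->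
  models w (alt_prefix false 0 (S k) (letter_at k j e c)) <-> nth j w false = c.
Proof.
  intros Hj H1 H2; unfold models, letter_at.
  rewrite alt_prefix_ex_split
    by first [exact I | apply letter_qf_below; simpl; lia | simpl; lia | assumption].
  cbn [eval_term]; split.
  - intros [v [_ [Hc [Hl Hr]]]]; rewrite sat_letter in Hc; cbn [eval_term] in Hc.
    rewrite update_eq in Hc.
    replace (v - 1) with j in Hc by lia; exact Hc.
  - intros Hc; exists (S j); repeat split; try lia.
    rewrite sat_letter; cbn [eval_term]; rewrite update_eq.
    replace (S j - 1) with j by lia; exact Hc.
Qed.

Lemma exists_nth_neq (w w' : list bool) : length w' = length w -> w' <> w ->
  exists j, j < length w /\ nth j w false <> nth j w' false.
Proof.
  intros Hlen Hne; apply NNPP; intros Hno; apply Hne.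
  apply nth_ext with false false; [exact Hlen|].
  intros j Hj; apply NNPP; intros Hd; apply Hno; exists j; split; [lia | congruence].
Qed.

Lemma separating_matrix w w' K :
  1 <= length w -> 1 <= length w' -> w' <> w -> Nat.log2 (length w) + 4 <= K ->
  exists M, qf_below K M /\
    models w (alt_prefix false 0 K M) /\ ~ models w' (alt_prefix false 0 K M).
Proof.
  intros Hw Hw' Hne HK; destruct K as [|k]; [lia|].
  assert (spec : forall v k' q e, 1 <= length v -> e <= length w -> k <= k' ->
                   dist_spec v k' q e).
  { intros v k' q e Hv He Hk; apply dist_spec_of_log2; [exact Hv|].
    pose proof (Nat.log2_le_mono _ _ He); lia. }
  destruct (lt_eq_lt_dec (length w') (length w)) as [[Hlt | Heq] | Hgt].
  - exists (dist (S k) false 0 TMin TMax (length w - 1)).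
    split; [exact (dist_qf_below (S k) false 0 TMin TMax _ I I)|].
    rewrite !models_dist_min_max by (auto; apply spec; lia); lia.
  - destruct (exists_nth_neq w w' Heq Hne) as [j [Hj Hd]].
    exists (letter_at k j (length w - 1 - j) (nth j w false)).
    split.
    + unfold letter_at; repeat split;
        [apply letter_qf_below | apply (dist_qf_below k true 1) ..]; simpl; auto; lia.
    + rewrite !models_letter_at by (try apply spec; lia).
      split; [reflexivity | congruence].
  - exists (FNot (dist (S k) true 0 TMin TMax (length w))).
    split; [exact (dist_qf_below (S k) true 0 TMin TMax _ I I)|].
    pose proof (models_dist_min_max w (S k) true (length w) Hw ltac:(apply spec; lia)).
    pose proof (models_dist_min_max w' (S k) true (length w) Hw' ltac:(apply spec; lia)).
    unfold models in *; rewrite !alt_prefix_not; simpl negb.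
    assert (~ 1 + length w <= length w) by lia; assert (1 + length w <= length w') by lia.
    tauto.
Qed.

Lemma log2_le_log2R n : 1 <= n -> (INR (Nat.log2 n) <= log2R (INR n))%R.
Proof.
  intros Hn; pose proof (Nat.log2_spec n ltac:(lia)) as [Hpow _].
  assert (Hln2 : (0 < ln 2)%R) by (rewrite <- ln_1; apply ln_increasing; lra).
  assert (Hpow' : (2 ^ Nat.log2 n <= INR n)%R).
  { replace 2%R with (INR 2) by (simpl; lra); rewrite <- pow_INR; apply le_INR, Hpow. }
  assert (Hln : (ln (2 ^ Nat.log2 n) <= ln (INR n))%R).
  { destruct (Rle_lt_or_eq_dec _ _ Hpow') as [Hlt | ->]; [|lra].
    left; apply ln_increasing; [apply pow_lt; lra | exact Hlt]. }
  rewrite ln_pow in Hln by lra.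
  unfold log2R; apply Rmult_le_reg_r with (ln 2); [exact Hln2|].
  replace (ln (INR n) / ln 2 * ln 2)%R with (ln (INR n)) by (field; lra); exact Hln.
Qed.

Theorem mainTheorem8 :
  exists C : R,
    forall w w' : list bool,
      1 <= length w -> 1 <= length w' -> w' <> w ->
      exists phi : formula,
        is_sentence phi /\ prenex phi /\
        (INR (qcount phi) <= log2R (INR (length w)) + C)%R /\
        strictly_alternating (qprefix phi) /\
        ends_with_forall (qprefix phi) /\
        models w phi /\ ~ models w' phi.
Proof.
  exists 5%R; intros w w' Hw Hw' Hne.
  set (m := Nat.log2 (length w)).
  set (t := (m + 1) / 2 + 1).
  assert (HK : m + 4 <= 2 * S t <= m + 5) by (pose proof (half_bounds (m + 1)); lia).
  destruct (separating_matrix w w' (2 * S t) Hw Hw' Hne) as (M & HM & Hsat & Hunsat); [lia|].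
  destruct (ex_prefix_shape M (2 * S t) HM t) as (Hsent & Hprenex & Hq & Halt & Hend); [lia|].
  exists (alt_prefix false 0 (2 * S t) M).
  refine (conj Hsent (conj Hprenex (conj _ (conj Halt (conj Hend (conj Hsat Hunsat)))))).
  rewrite Hq; apply Rle_trans with (INR (m + 5)); [apply le_INR; lia|].
  pose proof (log2_le_log2R (length w) Hw) as Hlog; fold m in Hlog.
  rewrite plus_INR; replace (INR 5) with 5%R by (simpl; lra); lra.
Qed.
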